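(* Let $G$ be a group and $X \subseteq \mathbb{N}$. Then $\rho^{X}(G) = \mathrm{Tor}^{X}_{\omega}(G)$.
   Context: For a group $G$ and $X \subseteq \mathbb{N}$, the $X$-torsion of $G$ is $\mathrm{Tor}^{X}(G) := \{ g \in G \mid \exists n \in X \text{ with } g^{n} = e\}$, and $G$ is $X$-torsion-free if $\mathrm{Tor}^{X}(G) = \{e\}$. The $X$-torsion-free radical $\rho^{X}(G)$ is the intersection of all normal subgroups $N \trianglelefteq G$ such that $G/N$ is $X$-torsion-free. Define inductively $\mathrm{Tor}^{X}_{0}(G) := \{e\}$, $\mathrm{Tor}^{X}_{n+1}(G) := \langle\langle \{ g \in G \mid g\,\mathrm{Tor}^{X}_{n}(G) \in \mathrm{Tor}^{X}(G/\mathrm{Tor}^{X}_{n}(G))\} \rangle\rangle^{G}$ (normal closure in $G$), and $\mathrm{Tor}^{X}_{\omega}(G) := \bigcup_{n \in \mathbb{N}} \mathrm{Tor}^{X}_{n}(G)$. *)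

Record Group := {
  carrier :> Type;
  gmul : carrier -> carrier -> carrier;
  gone : carrier;
  ginv : carrier -> carrier;
  gmulA : forall x y z, gmul x (gmul y z) = gmul (gmul x y) z;
  gmul1l : forall x, gmul gone x = x;
  gmul1r : forall x, gmul x gone = x;
  gmulVl : forall x, gmul (ginv x) x = gone;
  gmulVr : forall x, gmul x (ginv x) = gone
}.

Arguments gmul {G} : rename.
Arguments gone {G} : rename.
Arguments ginv {G} : rename.

Fixpoint gpow {G : Group} (g : G) (n : nat) : G :=
  match n with
  | O => gone
  | S k => gmul g (gpow g k)
  end.

Definition is_normal_subgroup {G : Group} (N : G -> Prop) : Prop :=
  N gone /\
  (forall x y, N x -> N y -> N (gmul x y)) /\
  (forall x, N x -> N (ginv x)) /\
  (forall x g, N x -> N (gmul (ginv g) (gmul x g))).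

Definition normal_closure {G : Group} (S : G -> Prop) : G -> Prop :=
  fun g => forall N, is_normal_subgroup N -> (forall s, S s -> N s) -> N g.

Definition TorX (X : nat -> Prop) (G : Group) : G -> Prop :=
  fun g => exists n, X n /\ gpow g n = gone.

(* For a normal subgroup N, the coset gN lies in Tor^X(G/N) iff
   exists n in X with (gN)^n = N, i.e. g^n \in N.  This is the literal
   unfolding of torsion in the quotient group G/N. *)
Definition TorX_mod (X : nat -> Prop) {G : Group} (N : G -> Prop) : G -> Prop :=
  fun g => exists n, X n /\ N (gpow g n).

(* G/N is X-torsion-free: Tor^X(G/N) is trivial, i.e. every coset gN that is
   X-torsion equals N (i.e. g \in N). *)
Definition quotient_X_torsion_free (X : nat -> Prop) {G : Group} (N : G -> Prop) : Prop :=
  forall g, TorX_mod X N g -> N g.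

Definition rhoX (X : nat -> Prop) (G : Group) : G -> Prop :=
  fun g => forall N, is_normal_subgroup N -> quotient_X_torsion_free X N -> N g.

Fixpoint TorX_n (X : nat -> Prop) (G : Group) (n : nat) : G -> Prop :=
  match n with
  | O => fun g => g = gone
  | S k => normal_closure (TorX_mod X (TorX_n X G k))
  end.

Definition TorX_omega (X : nat -> Prop) (G : Group) : G -> Prop :=
  fun g => exists n, TorX_n X G n g.

From Stdlib Require Import Lia.

(* Tor^X_omega is a normal subgroup, being the union of the increasing chain of normal
   subgroups Tor^X_n, and G / Tor^X_omega is X-torsion-free: if g^n lies in Tor^X_k then
   g lies in Tor^X_(k+1).  Hence rho^X(G) is contained in Tor^X_omega.  Conversely, if
   G/N is X-torsion-free then every generator of Tor^X_(k+1) lies in N as soon as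
   Tor^X_k does, so by induction Tor^X_omega is contained in N. *)

Section NormalSubgroups.

Context {G : Group}.

Lemma normal_closure_normal (S : G -> Prop) : is_normal_subgroup (normal_closure S).
Proof.
  unfold normal_closure; split; [| split; [| split]].
  - intros N [N1 _] _; exact N1.
  - intros x y Hx Hy N HN HS; apply (proj1 (proj2 HN)); [apply Hx | apply Hy]; assumption.
  - intros x Hx N HN HS; apply (proj1 (proj2 (proj2 HN))), Hx; assumption.
  - intros x g Hx N HN HS; apply (proj2 (proj2 (proj2 HN))), Hx; assumption.
Qed.

Lemma normal_closure_sub (S : G -> Prop) (g : G) : S g -> normal_closure S g.
Proof. intros Hg N _ HS; auto. Qed.

Lemma normal_closure_min (S N : G -> Prop) :
  is_normal_subgroup N -> (forall s, S s -> N s) -> forall g, normal_closure S g -> N g.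
Proof. intros HN HS g Hg; exact (Hg N HN HS). Qed.

Lemma normal_closure_mono (S T : G -> Prop) :
  (forall s, S s -> T s) -> forall g, normal_closure S g -> normal_closure T g.
Proof.
  intros HST; apply normal_closure_min; [apply normal_closure_normal |].
  intros s Hs; apply normal_closure_sub, HST, Hs.
Qed.

Lemma trivial_normal : is_normal_subgroup (fun g : G => g = gone).
Proof.
  split; [| split; [| split]]; intros; subst.
  - reflexivity.
  - apply gmul1l.
  - rewrite <- (gmul1l _ (ginv gone)); apply gmulVr.
  - rewrite gmul1l; apply gmulVl.
Qed.

Lemma chain_mono (N : nat -> G -> Prop) :
  (forall k g, N k g -> N (S k) g) -> forall k m g, k <= m -> N k g -> N m g.
Proof. intros HS k m g Hle; induction Hle; auto. Qed.

Lemma chain_union_normal (N : nat -> G -> Prop) :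
  (forall k, is_normal_subgroup (N k)) -> (forall k g, N k g -> N (S k) g) ->
  is_normal_subgroup (fun g => exists k, N k g).
Proof.
  intros HN HS; split; [| split; [| split]].
  - exists 0; apply HN.
  - intros x y [a Ha] [b Hb]; exists (a + b).
    apply HN.
    + apply (chain_mono N HS a); [lia | exact Ha].
    + apply (chain_mono N HS b); [lia | exact Hb].
  - intros x [a Ha]; exists a; apply HN; exact Ha.
  - intros x g [a Ha]; exists a; apply HN; exact Ha.
Qed.

End NormalSubgroups.

Lemma TorX_mod_mono (X : nat -> Prop) {G : Group} (N M : G -> Prop) :
  (forall g, N g -> M g) -> forall g, TorX_mod X N g -> TorX_mod X M g.
Proof. intros HNM g [n [Hn Hg]]; exists n; auto. Qed.

Section TorsionSeries.

Variables (X : nat -> Prop) (G : Group).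

Lemma TorX_n_normal (k : nat) : is_normal_subgroup (TorX_n X G k).
Proof. destruct k; [apply trivial_normal | apply normal_closure_normal]. Qed.

Lemma TorX_n_succ (k : nat) (g : G) : TorX_n X G k g -> TorX_n X G (S k) g.
Proof.
  revert g; induction k as [| k IH]; intros g Hg.
  - simpl in Hg; subst g; apply TorX_n_normal.
  - exact (normal_closure_mono _ _ (TorX_mod_mono X _ _ IH) g Hg).
Qed.

Lemma TorX_omega_normal : is_normal_subgroup (TorX_omega X G).
Proof. exact (chain_union_normal _ TorX_n_normal TorX_n_succ). Qed.

Lemma quotient_TorX_omega_torsion_free : quotient_X_torsion_free X (TorX_omega X G).
Proof.
  intros g [n [Hn [k Hk]]]; exists (S k).
  apply normal_closure_sub; exists n; auto.
Qed.

Lemma TorX_n_subset_torsion_free_kernel (N : G -> Prop) :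
  is_normal_subgroup N -> quotient_X_torsion_free X N ->
  forall k g, TorX_n X G k g -> N g.
Proof.
  intros HN HTF k; induction k as [| k IH]; intros g Hg.
  - simpl in Hg; subst g; apply HN.
  - apply (normal_closure_min _ _ HN) with (2 := Hg).
    intros s Hs; apply HTF; exact (TorX_mod_mono X _ _ IH s Hs).
Qed.

End TorsionSeries.

Theorem proposition2p3 (G : Group) (X : nat -> Prop) :
  forall g : G, rhoX X G g <-> TorX_omega X G g.
Proof.
  intros g; split.
  - intros Hg; apply Hg.
    + apply TorX_omega_normal.
    + apply quotient_TorX_omega_torsion_free.
  - intros [k Hk] N HN HTF.
    exact (TorX_n_subset_torsion_free_kernel X G N HN HTF k g Hk).
Qed.
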